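(* The clique number of the orthomorphism graph of $\mathbb{Z}_2\times\mathbb{Z}_4$ is $2$; that is, $\omega(\mathbb{Z}_2\times\mathbb{Z}_4)=2$.
   Context: A normalised orthomorphism of a finite group $G$ is a bijection $\theta\colon G\to G$ with $\theta(e)=e$ such that $x\mapsto x^{-1}\theta(x)$ is a bijection of $G$. Two orthomorphisms $\theta_1,\theta_2$ are orthogonal if $x\mapsto\theta_1(x)^{-1}\theta_2(x)$ is a bijection of $G$. The orthomorphism graph $\mathrm{Orth}(G)$ has the normalised orthomorphisms of $G$ as vertices, two being adjacent iff they are orthogonal; $\omega(G)$ is the largest size of a complete subgraph of $\mathrm{Orth}(G)$. *)

From HB Require Import structures.
From mathcomp Require Import all_boot all_order all_algebra all_fingroup all_solvable.
Set Implicit Arguments. Unset Strict Implicit. Unset Printing Implicit Defensive.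

Local Open Scope group_scope.

Section Orth.
Variable gT : finGroupType.

(* normalised orthomorphism: a bijection theta with theta 1 = 1 such that
   x |-> x^-1 * theta x is a bijection (on a finite type, injective = bijective) *)
Definition normalised_orthomorphism (theta : {ffun gT -> gT}) : bool :=
  [&& theta 1 == 1, injectiveb theta & injectiveb (fun x : gT => (x^-1 * theta x))].

Definition orthogonal_orth (theta1 theta2 : {ffun gT -> gT}) : bool :=
  injectiveb (fun x : gT => (theta1 x)^-1 * theta2 x).

Definition orth_clique (S : {set {ffun gT -> gT}}) : bool :=
  [forall t in S, normalised_orthomorphism t] &&
  [forall t1 in S, forall t2 in S, (t1 != t2) ==> orthogonal_orth t1 t2].

Definition orth_clique_number : nat :=
  \max_(S : {set {ffun gT -> gT}} | orth_clique S) #|S|.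
End Orth.

Definition Z2xZ4 : finGroupType := ('Z_2 * 'Z_4)%type.

From mathcomp Require Import all_boot all_order all_algebra all_fingroup all_solvable.

(* A normalised orthomorphism is determined by its table of values, a permutation
   of the codes [0, n) of the group elements fixing the code 0 of the identity;
   orthomorphisms and orthogonality are read off these tables through a
   left-division table on codes.  For Z_2 x Z_4 a finite search over the 8!
   permutations finds 48 orthomorphisms, an orthogonal pair among them, and no
   three pairwise orthogonal ones. *)

Set Implicit Arguments. Unset Strict Implicit. Unset Printing Implicit Defensive.

Local Open Scope group_scope.

Lemma orthogonal_orthC (gT : finGroupType) (t1 t2 : {ffun gT -> gT}) :
  orthogonal_orth t1 t2 = orthogonal_orth t2 t1.
Proof.
have swap (f g : gT -> gT) :
    injective (fun x => (f x)^-1 * g x) -> injective (fun x => (g x)^-1 * f x).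
  by move=> inj x y E; apply/inj/invg_inj; rewrite !invMg !invgK.
by apply/injectiveP/injectiveP; apply: swap.
Qed.

Section Tables.

Variables (n : nat) (ldiv : nat -> nat -> nat).

Definition table_orthomorphism (s : seq nat) : bool :=
  [&& nth 0%N s 0 == 0%N, uniq s & uniq [seq ldiv i (nth 0%N s i) | i <- iota 0 n]].

Definition table_orthogonal (s1 s2 : seq nat) : bool :=
  uniq [seq ldiv (nth 0%N s1 i) (nth 0%N s2 i) | i <- iota 0 n].

Definition orth_tables : seq (seq nat) :=
  [seq s <- permutations (iota 0 n) | table_orthomorphism s].

(* The [let] makes call-by-value evaluation compute [orth_tables] only once. *)
Definition orth_tables_triangle_free : bool :=
  let L := orth_tables in
  all (fun a => let N := [seq b <- L | table_orthogonal a b] in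
    all (fun b => all (fun c => (b != c) ==> ~~ table_orthogonal b c) N) N) L.

Definition orth_tables_edge : bool :=
  let L := orth_tables in
  has (fun a => has (fun b => (a != b) && table_orthogonal a b) L) L.

End Tables.

Section Coding.

Variables (gT : finGroupType) (e : seq gT) (ldiv : nat -> nat -> nat).
Hypotheses (e_uniq : uniq e) (mem_e : forall x, x \in e) (index_e1 : index 1 e = 0%N).
Hypothesis ldivE : forall x y, ldiv (index x e) (index y e) = index (x^-1 * y) e.

Local Notation n := (size e).

Definition ffun_table (t : {ffun gT -> gT}) : seq nat := [seq index (t x) e | x <- e].

Definition table_ffun (s : seq nat) : {ffun gT -> gT} :=
  [ffun x => nth 1 e (nth 0%N s (index x e))].

Lemma index_e_inj : injective (index^~ e).
Proof. by apply: (can_inj (g := nth 1 e)) => x; rewrite nth_index. Qed.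

Lemma map_index_e : [seq index x e | x <- e] = iota 0 n.
Proof.
apply: (@eq_from_nth _ 0%N); rewrite size_map ?size_iota // => i lt_i_n.
by rewrite (nth_map 1) // nth_iota // index_uniq.
Qed.

Lemma injectiveb_index (f : gT -> gT) : injectiveb f = uniq [seq index (f x) e | x <- e].
Proof.
have e_enum : perm_eq e (enum gT).
  by apply: uniq_perm; rewrite ?enum_uniq // => x; rewrite mem_enum mem_e.
rewrite (map_comp (index^~ e) f) map_inj_uniq; last exact: index_e_inj.
by apply: perm_uniq; rewrite perm_sym; apply: perm_map.
Qed.

Lemma nth_ffun_table (t : {ffun gT -> gT}) x :
  nth 0%N (ffun_table t) (index x e) = index (t x) e.
Proof. by rewrite (nth_map 1) ?index_mem // nth_index. Qed.

Lemma normalised_table (t : {ffun gT -> gT}) :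
  normalised_orthomorphism t = table_orthomorphism n ldiv (ffun_table t).
Proof.
congr [&& _, _ & _]; first by rewrite -{2 3}index_e1 nth_ffun_table (inj_eq index_e_inj).
  exact: injectiveb_index.
rewrite injectiveb_index -map_index_e -map_comp; congr uniq; apply: eq_map => x /=.
by rewrite nth_ffun_table ldivE.
Qed.

Lemma orthogonal_table (t1 t2 : {ffun gT -> gT}) :
  orthogonal_orth t1 t2 = table_orthogonal n ldiv (ffun_table t1) (ffun_table t2).
Proof.
rewrite /orthogonal_orth /table_orthogonal injectiveb_index -map_index_e -map_comp; congr uniq.
by apply: eq_map => x /=; rewrite !nth_ffun_table ldivE.
Qed.

Lemma ffun_table_inj : injective ffun_table.
Proof.
by move=> t1 t2 E; apply/ffunP => x; apply: index_e_inj; rewrite -!nth_ffun_table E.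
Qed.

Lemma perm_ffun_table (t : {ffun gT -> gT}) : injectiveb t -> perm_eq (ffun_table t) (iota 0 n).
Proof.
rewrite injectiveb_index => t_uniq; apply: uniq_perm; rewrite ?iota_uniq //.
have [||_ //] := uniq_min_size t_uniq (s2 := iota 0 n).
- by move=> _ /mapP[x _ ->]; rewrite mem_iota index_mem mem_e.
- by rewrite size_iota size_map.
Qed.

Lemma mem_orth_tables (t : {ffun gT -> gT}) :
  normalised_orthomorphism t -> ffun_table t \in orth_tables n ldiv.
Proof.
move=> t_orth; rewrite mem_filter -normalised_table t_orth mem_permutations.
by apply: perm_ffun_table; case/and3P: t_orth.
Qed.

Lemma table_ffunK (s : seq nat) : perm_eq s (iota 0 n) -> ffun_table (table_ffun s) = s.
Proof.
move=> s_perm; have /esym size_s := perm_size s_perm; rewrite size_iota in size_s.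
rewrite -[RHS]take_size -(map_nth_iota0 0%N) // -size_s -map_index_e -map_comp.
apply: eq_map => x /=; rewrite ffunE index_uniq //.
have : nth 0%N s (index x e) \in iota 0 n.
  by rewrite -(perm_mem s_perm) mem_nth // -size_s index_mem.
by rewrite mem_iota.
Qed.

Lemma orth_clique_number_le2 : orth_tables_triangle_free n ldiv -> orth_clique_number gT <= 2.
Proof.
rewrite /orth_tables_triangle_free /= => free.
apply/bigmax_leqP => S /andP[/forall_inP S_orth /forall_inP S_perp].
rewrite leqNgt; apply/card_gt2P => -[x [y [z [[Sx Sy Sz] [xy yz zx]]]]].
have perp a b : a \in S -> b \in S -> a != b ->
    table_orthogonal n ldiv (ffun_table a) (ffun_table b).
  move=> Sa Sb ab; rewrite -orthogonal_table.
  by move/forall_inP/(_ b Sb)/implyP: (S_perp a Sa); apply.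
have tab a : a \in S -> ffun_table a \in orth_tables n ldiv.
  by move=> Sa; apply/mem_orth_tables/S_orth.
have Ny : ffun_table y \in [seq b <- orth_tables n ldiv | table_orthogonal n ldiv (ffun_table x) b].
  by rewrite mem_filter perp ?tab.
have Nz : ffun_table z \in [seq b <- orth_tables n ldiv | table_orthogonal n ldiv (ffun_table x) b].
  by rewrite mem_filter perp ?tab // eq_sym.
move/allP/(_ _ (tab x Sx))/allP/(_ _ Ny)/allP/(_ _ Nz): free.
by rewrite (inj_eq ffun_table_inj) yz perp.
Qed.

Lemma orth_clique_number_ge2 : orth_tables_edge n ldiv -> 2 <= orth_clique_number gT.
Proof.
rewrite /orth_tables_edge /= => /hasP[a a_tab /hasP[b b_tab /andP[ab ab_perp]]].
have lift s : s \in orth_tables n ldiv ->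
    normalised_orthomorphism (table_ffun s) /\ ffun_table (table_ffun s) = s.
  rewrite mem_filter mem_permutations => /andP[s_orth /table_ffunK s_K].
  by rewrite normalised_table s_K.
have [a_orth a_K] := lift a a_tab; have [b_orth b_K] := lift b b_tab.
have ab_ffun : table_ffun a != table_ffun b.
  by apply: contra ab => /eqP E; rewrite -a_K -b_K E.
have clique : orth_clique [set table_ffun a; table_ffun b].
  apply/andP; split; first by apply/forall_inP => t /set2P[]->.
  apply/forall_inP => t1 /set2P[]-> ; apply/forall_inP => t2 /set2P[]->;
    apply/implyP; rewrite ?eqxx // => _;
    by rewrite ?[orthogonal_orth (table_ffun b) _]orthogonal_orthC orthogonal_table a_K b_K.
by apply: leq_trans (leq_bigmax_cond _ clique); rewrite cards2 ab_ffun.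
Qed.

End Coding.

Definition Z2xZ4_elements : seq Z2xZ4 := [seq (inZp i, inZp j) | i <- iota 0 2, j <- iota 0 4].

(* The element (i, j) is listed at position 4 i + j, so left division
   subtracts the two coordinates separately. *)
Definition Z2xZ4_ldiv (m n : nat) : nat :=
  ((m %/ 4 + n %/ 4) %% 2 * 4 + (n %% 4 + 4 - m %% 4) %% 4)%N.

Lemma Z2xZ4_elements_uniq : uniq Z2xZ4_elements.
Proof. by vm_compute. Qed.

Lemma mem_Z2xZ4_elements x : x \in Z2xZ4_elements.
Proof.
case: x => a b; rewrite -(valZpK a) -(valZpK b).
by apply: allpairs_f; rewrite mem_iota ltn_ord.
Qed.

Lemma index_Z2xZ4_elements1 : index 1 Z2xZ4_elements = 0%N.
Proof. by vm_compute. Qed.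

Lemma Z2xZ4_ldivE x y :
  Z2xZ4_ldiv (index x Z2xZ4_elements) (index y Z2xZ4_elements) =
  index (x^-1 * y) Z2xZ4_elements.
Proof.
have table_ok : all (fun x => all (fun y =>
    Z2xZ4_ldiv (index x Z2xZ4_elements) (index y Z2xZ4_elements) ==
    index (x^-1 * y) Z2xZ4_elements) Z2xZ4_elements) Z2xZ4_elements.
  by vm_compute.
by apply/eqP; move/allP/(_ x (mem_Z2xZ4_elements x))/allP/(_ y (mem_Z2xZ4_elements y)): table_ok.
Qed.

Theorem corollary3 : orth_clique_number Z2xZ4 = 2.
Proof.
have free : orth_tables_triangle_free 8 Z2xZ4_ldiv by vm_compute.
have edge : orth_tables_edge 8 Z2xZ4_ldiv by vm_compute.
have := orth_clique_number_le2 Z2xZ4_elements_uniq mem_Z2xZ4_elements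
  index_Z2xZ4_elements1 Z2xZ4_ldivE free.
have := orth_clique_number_ge2 Z2xZ4_elements_uniq mem_Z2xZ4_elements
  index_Z2xZ4_elements1 Z2xZ4_ldivE edge.
by move=> ge2 le2; apply/eqP; rewrite eqn_leq le2 ge2.
Qed.
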